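(* Let $m,n,r$ be positive integers with $r\le n$, and let $S:M_r\to M_n$ be the linear map $$S(a)=\begin{pmatrix} a&0\\0&0\end{pmatrix}\in M_n,\qquad a\in M_r,$$ which places an $r\times r$ matrix in the upper-left corner of an $n\times n$ zero matrix. If a positive linear map $\phi:M_m\to M_r$ generates an exposed ray of the convex cone $\mathbb P_1[M_m,M_r]$, then $S\circ\phi:M_m\to M_n$ generates an exposed ray of the convex cone $\mathbb P_1[M_m,M_n]$.
   Context: $M_k$ denotes the algebra of $k\times k$ complex matrices. A linear map $\phi:M_m\to M_n$ is positive if it sends positive semidefinite matrices to positive semidefinite matrices; $\mathbb P_1[M_m,M_n]$ denotes the convex cone of all positive linear maps $M_m\to M_n$, regarded as a cone in the real vector space of Hermiticity-preserving linear maps $M_m\to M_n$. A nonzero $\phi$ in the cone generates an exposed ray if there is a real linear functional $f$ on that real vector space with $f\ge 0$ on the cone such that $\{\psi\in\mathbb P_1[M_m,M_n]: f(\psi)=0\}=\{\lambda\phi:\lambda\ge 0\}$. *)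

From HB Require Import structures.
From mathcomp Require Import all_boot all_order all_algebra.
From mathcomp Require Import complex.
Set Implicit Arguments. Unset Strict Implicit. Unset Printing Implicit Defensive.
Import Order.TTheory GRing.Theory Num.Theory.
Local Open Scope ring_scope.
Local Open Scope complex_scope.

Section Defs.
Variable R : rcfType.
Local Notation C := (R[i]).

Definition adjmx (k l : nat) (A : 'M[C]_(k, l)) : 'M[C]_(l, k) :=
  map_mx Num.conj A^T.

Definition hermitian (k : nat) (A : 'M[C]_k) : Prop := adjmx A = A.

Definition psd (k : nat) (A : 'M[C]_k) : Prop :=
  hermitian A /\ forall v : 'cV[C]_k, 0 <= (adjmx v *m A *m v) 0 0.

Definition linmap (k l : nat) (f : 'M[C]_k -> 'M[C]_l) : Prop :=
  forall (a : C) (x y : 'M[C]_k), f (a *: x + y) = a *: f x + f y.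

(* Hermiticity-preserving linear maps: the ambient real vector space *)
Definition hp_map (k l : nat) (f : 'M[C]_k -> 'M[C]_l) : Prop :=
  linmap f /\ forall x, hermitian x -> hermitian (f x).

Definition positive_map (k l : nat) (f : 'M[C]_k -> 'M[C]_l) : Prop :=
  linmap f /\ forall x, psd x -> psd (f x).

(* real linear functionals on the real vector space of Hermiticity-preserving maps
   (given as functions defined on all maps, only their values on HP maps matter) *)
Definition real_lin_functional (k l : nat)
  (F : ('M[C]_k -> 'M[C]_l) -> R) : Prop :=
  forall (a b : R) (p q : 'M[C]_k -> 'M[C]_l), hp_map p -> hp_map q ->
    F (fun x => a%:C *: p x + b%:C *: q x) = a * F p + b * F q.

Definition exposed_ray (k l : nat) (phi : 'M[C]_k -> 'M[C]_l) : Prop :=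
  positive_map phi /\ (exists x, phi x != 0) /\
  exists F : ('M[C]_k -> 'M[C]_l) -> R,
    real_lin_functional F /\
    (forall psi, positive_map psi -> 0 <= F psi) /\
    (forall psi, positive_map psi ->
       (F psi = 0 <-> exists lam : R, 0 <= lam /\ forall x, psi x = lam%:C *: phi x)).

Definition corner (r n : nat) (a : 'M[C]_r) : 'M[C]_n :=
  \matrix_(i < n, j < n)
    match (insub (val i) : option 'I_r), (insub (val j) : option 'I_r) with
    | Some i', Some j' => a i' j'
    | _, _ => 0
    end.

End Defs.

From Pilot Require Import Defs.
From HB Require Import structures.
From mathcomp Require Import all_boot all_order all_algebra.
From mathcomp Require Import complex ring.
From Stdlib Require Import FunctionalExtensionality.
Set Implicit Arguments. Unset Strict Implicit. Unset Printing Implicit Defensive.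
Import Order.TTheory GRing.Theory Num.Theory.
Local Open Scope ring_scope.

(* Let [F] expose [phi], let [compress A] be the upper-left r x r block of [A], and let
   [lower_mass psi] add up the real parts of the diagonal entries below row r of
   [psi T], for [T] in a spanning family of rank-one positive test matrices.  Both
   summands of [G psi := F (compress o psi) + lower_mass psi] are nonnegative on
   positive maps.  If [lower_mass psi = 0], every [psi T] is a positive semidefinite
   matrix with vanishing diagonal outside the corner, so it lives in the corner; by
   linearity [psi = corner o compress o psi].  Then [F (compress o psi) = 0] forces
   [compress o psi = lam phi], hence [psi = lam (corner o phi)]. *)

Section Adjoint.
Variable R : rcfType.
Local Notation C := R[i].

Lemma adjmxK k l (A : 'M[C]_(k, l)) : adjmx (adjmx A) = A.
Proof. by apply/matrixP => i j; rewrite !mxE conjCK. Qed.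

Lemma adjmxM k l p (A : 'M[C]_(k, l)) (B : 'M[C]_(l, p)) :
  adjmx (A *m B) = adjmx B *m adjmx A.
Proof. by rewrite /adjmx trmx_mul map_mxM. Qed.

Lemma adjmxD k l (A B : 'M[C]_(k, l)) : adjmx (A + B) = adjmx A + adjmx B.
Proof. by apply/matrixP => i j; rewrite !mxE rmorphD. Qed.

Lemma adjmxZ k l (c : C) (A : 'M[C]_(k, l)) :
  adjmx (c *: A) = Num.conj c *: adjmx A.
Proof. by apply/matrixP => i j; rewrite !mxE rmorphM. Qed.

Lemma adjmx_delta k l (a : 'I_k) (b : 'I_l) :
  adjmx (delta_mx a b : 'M[C]_(k, l)) = delta_mx b a.
Proof. by apply/matrixP => i j; rewrite !mxE conjC_nat andbC. Qed.

Lemma adjmx_pid k l r : adjmx (pid_mx r : 'M[C]_(k, l)) = pid_mx r.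
Proof.
by apply/matrixP => i j; rewrite !mxE conjC_nat eq_sym; case: eqP => // ->.
Qed.

Lemma hermitian_entry k (A : 'M[C]_k) (i j : 'I_k) :
  Defs.hermitian A -> A j i = Num.conj (A i j).
Proof. by move=> hA; rewrite -{1}hA !mxE. Qed.

Lemma hermitian_mulmx k l (A : 'M[C]_k) (X : 'M[C]_(k, l)) :
  Defs.hermitian A -> Defs.hermitian (adjmx X *m A *m X).
Proof. by move=> hA; rewrite /Defs.hermitian !adjmxM adjmxK hA mulmxA. Qed.

Lemma psd_mulmx k l (A : 'M[C]_k) (X : 'M[C]_(k, l)) :
  psd A -> psd (adjmx X *m A *m X).
Proof.
case=> hA pA; split=> [|v]; first exact: hermitian_mulmx.
by have := pA (X *m v); rewrite adjmxM !mulmxA.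
Qed.

Definition outer k (u : 'cV[C]_k) : 'M[C]_k := u *m adjmx u.

Lemma psd_outer k (u : 'cV[C]_k) : psd (outer u).
Proof.
split=> [|v]; first by rewrite /Defs.hermitian adjmxM adjmxK.
have -> : adjmx v *m outer u *m v = (adjmx v *m u) *m adjmx (adjmx v *m u).
  by rewrite adjmxM adjmxK !mulmxA.
by rewrite mxE big_ord1 !mxE mul_conjC_ge0.
Qed.

Lemma form_delta k (A : 'M[C]_k) (a b : 'I_k) :
  adjmx (delta_mx a 0 : 'cV[C]_k) *m A *m delta_mx b 0 = (A a b)%:M.
Proof.
by apply/matrixP => i j; rewrite !ord1 adjmx_delta -rowE -colE !mxE eqxx mulr1n.
Qed.

Lemma psd_diag_ge0 k (A : 'M[C]_k) a : psd A -> 0 <= A a a.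
Proof. by case=> _ /(_ (delta_mx a 0)); rewrite form_delta mxE eqxx mulr1n. Qed.

(* If [A a b != 0], the form at [u = conj(c / A a b) e_a + e_b] equals [2 c + A b b],
   which is negative for [c = -(A b b + 1) / 2]. *)
Lemma psd_diag0_row k (A : 'M[C]_k) (a b : 'I_k) :
  psd A -> A a a = 0 -> A a b = 0.
Proof.
move=> pA Aaa0; apply/eqP/contraT => Aab_neq0.
have [hA formA] := pA.
pose c : C := - (A b b + 1) / 2%:R.
have cc : Num.conj c = c.
  by rewrite /c rmorphM rmorphN rmorphD /= -hermitian_entry // rmorph1 fmorphV rmorph_nat.
pose u : 'cV[C]_k := Num.conj (c / A a b) *: delta_mx a 0 + delta_mx b 0.
have := formA u.
rewrite /u adjmxD adjmxZ !mulmxDl !mulmxDr -!scalemxAl -!scalemxAr !form_delta.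
rewrite !mxE !eqxx !mulr1n Aaa0 (hermitian_entry a b hA) !mulr0 add0r -rmorphM /=.
rewrite conjCK !divfK // cc.
have -> : c + (c + A b b) = -1 by rewrite /c; field.
by rewrite oppr_ge0 ler10.
Qed.

Lemma psd_diag0_col k (A : 'M[C]_k) (a b : 'I_k) :
  psd A -> A a a = 0 -> A b a = 0.
Proof.
move=> pA /(psd_diag0_row b pA) Aab0.
by rewrite (hermitian_entry _ _ pA.1) Aab0 conjC0.
Qed.

End Adjoint.

Section TestMatrices.
Variable R : rcfType.
Local Notation C := R[i].
Variable k : nat.

Definition testmx (a b : 'I_k) (t : bool) : 'M[C]_k :=
  outer (delta_mx a 0 + (if t then 'i else 1) *: delta_mx b 0).

Lemma testmxE (a b : 'I_k) t (c := if t then 'i else 1) :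
  testmx a b t = delta_mx a a + Num.conj c *: delta_mx a b + c *: delta_mx b a
                 + (c * Num.conj c) *: delta_mx b b.
Proof.
rewrite /testmx -/c /outer adjmxD adjmxZ !adjmx_delta mulmxDl !mulmxDr.
by rewrite -!scalemxAl -!scalemxAr !mul_delta_mx scalerA !addrA.
Qed.

Lemma delta_testmx (a b : 'I_k) :
  delta_mx a b = 2%:R^-1 *: testmx a b false + (('i / 2%:R) *: testmx a b true
                 + ((- (1 + 'i) / 8%:R) *: testmx a a false
                 + (- (1 + 'i) / 8%:R) *: testmx b b false)).
Proof.
rewrite !testmxE /= conjC1 conjCi.
(* Abstracting ['i] and the entries keeps [field] from unfolding them. *)
move: (delta_mx a a) (delta_mx a b) (delta_mx b a) (delta_mx b b) (@sqrCi C).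
move: ('i : C) => j d1 d2 d3 d4 j2.
apply/matrixP => i i'; rewrite !mxE.
move: (d1 i i') (d2 i i') (d3 i i') (d4 i i') => x1 x2 x3 x4.
by field: j2.
Qed.

Lemma psd_testmx (a b : 'I_k) t : psd (testmx a b t).
Proof. exact: psd_outer. Qed.

End TestMatrices.

Arguments testmx {R k}.
Arguments psd_testmx {R k}.

Section LinearMaps.
Variable R : rcfType.
Local Notation C := R[i].
Variables k l : nat.
Implicit Types f g : 'M[C]_k -> 'M[C]_l.

Lemma linmap0 f : linmap f -> f 0 = 0.
Proof.
move=> lin_f; have := lin_f 1 0 0; rewrite !scale1r addr0 => f0.
by apply: (addrI (f 0)); rewrite addr0 -f0.
Qed.

Lemma linmapD f x y : linmap f -> f (x + y) = f x + f y.
Proof. by move=> lin_f; have := lin_f 1 x y; rewrite !scale1r. Qed.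

Lemma linmapZ f c x : linmap f -> f (c *: x) = c *: f x.
Proof. by move=> lin_f; have := lin_f c x 0; rewrite !addr0 linmap0 // addr0. Qed.

Lemma linmap_sum f (I : finType) (G : I -> 'M[C]_k) :
  linmap f -> f (\sum_i G i) = \sum_i f (G i).
Proof.
move=> lin_f; elim/big_rec2: _ => [|i x y _ <-]; first exact: linmap0.
exact: linmapD.
Qed.

Lemma linmap_mulmx f p (A : 'M[C]_(p, l)) (B : 'M[C]_(l, p)) :
  linmap f -> linmap (fun x => A *m f x *m B).
Proof. by move=> lin_f c x y; rewrite lin_f mulmxDr mulmxDl -scalemxAr -scalemxAl. Qed.

Lemma linmap_eq_delta f g : linmap f -> linmap g ->
  (forall a b, f (delta_mx a b) = g (delta_mx a b)) -> f =1 g.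
Proof.
move=> lin_f lin_g fg x; rewrite (matrix_sum_delta x).
rewrite (linmap_sum _ lin_f) (linmap_sum _ lin_g).
apply: eq_bigr => a _; rewrite (linmap_sum _ lin_f) (linmap_sum _ lin_g).
by apply: eq_bigr => b _; rewrite (linmapZ _ _ lin_f) (linmapZ _ _ lin_g) fg.
Qed.

Lemma linmap_eq_testmx f g : linmap f -> linmap g ->
  (forall a b t, f (testmx a b t) = g (testmx a b t)) -> f =1 g.
Proof.
move=> lin_f lin_g fg; apply: linmap_eq_delta => // a b.
have agree c x y : f x = g x -> f y = g y -> f (c *: x + y) = g (c *: x + y).
  by move=> fx fy; rewrite lin_f lin_g fx fy.
rewrite delta_testmx; do 3!apply: (agree _ _ _ (fg _ _ _)).
by rewrite (linmapZ _ _ lin_f) (linmapZ _ _ lin_g) fg.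
Qed.

End LinearMaps.

Section Corner.
Variable R : rcfType.
Local Notation C := R[i].
Variables (n r : nat) (hrn : (r <= n)%N).

Lemma pid_mulmxE p (B : 'M[C]_(r, p)) (i : 'I_n) j :
  ((pid_mx r : 'M_(n, r)) *m B) i j = if insub (val i) is Some i' then B i' j else 0.
Proof.
rewrite mxE; case: insubP => [i' _ vi|ri].
  rewrite (bigD1 i') //= mxE -vi eqxx ltn_ord mul1r big1 ?addr0 // => k ki'.
  by rewrite mxE -vi (inj_eq val_inj) eq_sym (negbTE ki') mul0r.
by apply: big1 => k _; rewrite mxE (negbTE ri) andbF mul0r.
Qed.

Lemma mulmx_pidE p (B : 'M[C]_(p, r)) i (j : 'I_n) :
  (B *m (pid_mx r : 'M_(r, n))) i j = if insub (val j) is Some j' then B i j' else 0.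
Proof.
transitivity ((B *m pid_mx r)^T j i); first by rewrite [RHS]mxE.
rewrite trmx_mul tr_pid_mx pid_mulmxE.
by case: insub => // j'; rewrite mxE.
Qed.

Lemma corner_pid (a : 'M[C]_r) : corner n a = pid_mx r *m a *m pid_mx r.
Proof.
apply/matrixP => i j; rewrite mulmx_pidE mxE.
case: (insub (val j)) => [j'|]; last by case: insub.
by rewrite pid_mulmxE; case: insub.
Qed.

Definition compress (A : 'M[C]_n) : 'M[C]_r := pid_mx r *m A *m pid_mx r.

Lemma compressE (A : 'M[C]_n) i j :
  compress A i j = A (widen_ord hrn i) (widen_ord hrn j).
Proof.
rewrite /compress (pid_mxErow _ hrn) -tr_pid_mx (pid_mxErow _ hrn).
by rewrite trmx_mxsub trmx1 mul_rowsub_mx -mxsub_mul mul1mx mulmx1 mxE.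
Qed.

Lemma compress_corner (a : 'M[C]_r) : compress (corner n a) = a.
Proof.
rewrite /compress corner_pid !mulmxA pid_mx_id // pid_mx_1 mul1mx.
by rewrite -mulmxA pid_mx_id // pid_mx_1 mulmx1.
Qed.

Lemma compressZ c (A : 'M[C]_n) : compress (c *: A) = c *: compress A.
Proof. by rewrite /compress -scalemxAr -scalemxAl. Qed.

Lemma cornerZ c (a : 'M[C]_r) : corner n (c *: a) = c *: corner n a.
Proof. by rewrite !corner_pid -scalemxAr -scalemxAl. Qed.

Lemma corner_out (a : 'M[C]_r) (k l : 'I_n) : (r <= k)%N -> corner n a k l = 0.
Proof. by move=> rk; rewrite mxE insubN // -leqNgt. Qed.

Lemma linmap_corner_compress m (f : 'M[C]_m -> 'M[C]_n) :
  linmap f -> linmap (fun x => corner n (compress (f x))).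
Proof.
move=> lin_f c x y; rewrite !corner_pid /compress.
exact: (linmap_mulmx _ _ (linmap_mulmx _ _ lin_f)).
Qed.

Lemma hp_map_compress m (f : 'M[C]_m -> 'M[C]_n) :
  hp_map f -> hp_map (fun x => compress (f x)).
Proof.
case=> lin_f herm_f; split=> [|x /herm_f]; first exact: linmap_mulmx.
by move/(hermitian_mulmx (pid_mx r : 'M[C]_(n, r))); rewrite adjmx_pid.
Qed.

Lemma positive_map_compress m (f : 'M[C]_m -> 'M[C]_n) :
  positive_map f -> positive_map (fun x => compress (f x)).
Proof.
case=> lin_f psd_f; split=> [|x /psd_f]; first exact: linmap_mulmx.
by move/(psd_mulmx (pid_mx r : 'M[C]_(n, r))); rewrite adjmx_pid.
Qed.

Lemma positive_map_corner m (f : 'M[C]_m -> 'M[C]_r) :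
  positive_map f -> positive_map (fun x => corner n (f x)).
Proof.
case=> lin_f psd_f; split=> [c x y|x /psd_f].
  by rewrite !corner_pid; exact: linmap_mulmx.
by move/(psd_mulmx (pid_mx r : 'M[C]_(r, n))); rewrite adjmx_pid -corner_pid.
Qed.

End Corner.

Section RealPart.
Variable R : rcfType.
Implicit Types z w : R[i].

Lemma Re_ge0 z : 0 <= z -> 0 <= complex.Re z.
Proof. by rewrite lecE => /andP[]. Qed.

Lemma Re_eq0 z : 0 <= z -> complex.Re z = 0 -> z = 0.
Proof. by case: z => x y; rewrite lecE /= => /andP[/eqP -> _] ->. Qed.

Lemma Re_real_comb (a b : R) z w :
  complex.Re ((a%:C)%C * z + (b%:C)%C * w) = a * complex.Re z + b * complex.Re w.
Proof. by case: z w => [x1 y1] [x2 y2] /=; rewrite !mul0r !subr0. Qed.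

End RealPart.

Section LowerMass.
Variable R : rcfType.
Local Notation C := R[i].
Variables m n r : nat.
Implicit Types psi : 'M[C]_m -> 'M[C]_n.

Definition lower_mass psi : R :=
  \sum_(abt : 'I_m * 'I_m * bool) \sum_(k < n | (r <= k)%N)
    complex.Re (psi (testmx abt.1.1 abt.1.2 abt.2) k k).

Lemma lower_mass_ge0 psi : positive_map psi -> 0 <= lower_mass psi.
Proof.
case=> _ psd_psi; apply: sumr_ge0 => abt _; apply: sumr_ge0 => k _.
exact/Re_ge0/psd_diag_ge0/psd_psi/psd_testmx.
Qed.

Lemma lower_mass_eq0P psi : positive_map psi -> lower_mass psi = 0 ->
  forall a b t (k : 'I_n), (r <= k)%N -> psi (testmx a b t) k k = 0.
Proof.
case=> _ psd_psi mass0 a b t k rk.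
have Re_ge0_at abt (k' : 'I_n) :
    0 <= complex.Re (psi (testmx abt.1.1 abt.1.2 abt.2) k' k').
  exact/Re_ge0/psd_diag_ge0/psd_psi/psd_testmx.
apply/Re_eq0; first exact/psd_diag_ge0/psd_psi/psd_testmx.
have := psumr_eq0P (fun abt _ => sumr_ge0 _ (fun k' _ => Re_ge0_at abt k')) mass0
  (i := (a, b, t)) isT.
by move/psumr_eq0P => -> // k' _; exact: Re_ge0_at.
Qed.

Lemma lower_mass_eq0 psi :
  (forall x (k : 'I_n), (r <= k)%N -> psi x k k = 0) -> lower_mass psi = 0.
Proof. by move=> psi0; apply: big1 => abt _; apply: big1 => k rk; rewrite psi0. Qed.

Lemma lower_mass_real_comb (a b : R) p q :
  lower_mass (fun x => (a%:C)%C *: p x + (b%:C)%C *: q x)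
  = a * lower_mass p + b * lower_mass q.
Proof.
rewrite /lower_mass !mulr_sumr -big_split; apply: eq_bigr => abt _.
rewrite !mulr_sumr -big_split; apply: eq_bigr => k _.
by rewrite !mxE Re_real_comb.
Qed.

End LowerMass.

Section Lift.
Variable R : rcfType.
Local Notation C := R[i].
Variables (m n r : nat) (hrn : (r <= n)%N).

Lemma lower_mass0_corner (psi : 'M[C]_m -> 'M[C]_n) :
  positive_map psi -> lower_mass r psi = 0 ->
  forall x, psi x = corner n (compress r (psi x)).
Proof.
move=> pos_psi mass0; have [lin_psi psd_psi] := pos_psi.
apply: (linmap_eq_testmx lin_psi (linmap_corner_compress r lin_psi)) => a b t.
have diag0 := lower_mass_eq0P pos_psi mass0 a b t.
have psd_T := psd_psi _ (psd_testmx a b t).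
apply/matrixP => i j; rewrite mxE.
case: insubP => [i' _ vi|ri]; last by rewrite (psd_diag0_row j psd_T) // diag0 // leqNgt.
case: insubP => [j' _ vj|rj]; last by rewrite (psd_diag0_col i psd_T) // diag0 // leqNgt.
by rewrite compressE; congr (psi _ _ _); apply/val_inj.
Qed.

Lemma real_lin_functional_lift (F : ('M[C]_m -> 'M[C]_r) -> R) :
  real_lin_functional F ->
  real_lin_functional (fun psi : 'M[C]_m -> 'M[C]_n =>
                         F (fun x => compress r (psi x)) + lower_mass r psi).
Proof.
move=> F_lin a b p q hp_p hp_q.
have -> : (fun x => compress r ((a%:C)%C *: p x + (b%:C)%C *: q x)) =
          (fun x => (a%:C)%C *: compress r (p x) + (b%:C)%C *: compress r (q x)).
  by apply: functional_extensionality => x; rewrite -!compressZ /compress mulmxDr mulmxDl.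
rewrite F_lin ?lower_mass_real_comb; first by rewrite !mulrDr addrACA.
all: exact: hp_map_compress.
Qed.

End Lift.

Theorem proposition2p1 (R : rcfType) (m n r : nat)
  (hm : (0 < m)%N) (hn : (0 < n)%N) (hr : (0 < r)%N) (hrn : (r <= n)%N)
  (phi : 'M[R[i]]_m -> 'M[R[i]]_r) :
  exposed_ray phi -> exposed_ray (fun x => corner n (phi x)).
Proof.
move=> [pos_phi [[x0 phi_x0] [F [F_lin [F_ge0 F_eq0]]]]].
split; first exact: positive_map_corner.
split.
  exists x0; apply: contra phi_x0 => /eqP corner0.
  by rewrite -(compress_corner hrn (phi x0)) corner0 /compress mulmx0 mul0mx.
exists (fun psi => F (fun x => compress r (psi x)) + lower_mass r psi).
split; first exact: real_lin_functional_lift.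
have F_compress_ge0 psi : positive_map psi -> 0 <= F (fun x => compress r (psi x)).
  by move=> pos_psi; exact/F_ge0/positive_map_compress.
split=> [psi pos_psi|psi pos_psi]; first by rewrite addr_ge0 ?F_compress_ge0 ?lower_mass_ge0.
split=> [/eqP|[lam [lam_ge0 psiE]]].
  rewrite paddr_eq0 ?F_compress_ge0 ?lower_mass_ge0 // => /andP[/eqP F0 /eqP mass0].
  have [lam [lam_ge0 compE]] := (F_eq0 _ (positive_map_compress r pos_psi)).1 F0.
  by exists lam; split=> // x; rewrite (lower_mass0_corner hrn pos_psi mass0) compE cornerZ.
rewrite lower_mass_eq0 => [|x k rk]; last by rewrite psiE mxE corner_out ?mulr0.
rewrite addr0; apply/(F_eq0 _ (positive_map_compress r pos_psi)).
by exists lam; split=> // x; rewrite psiE compressZ compress_corner.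
Qed.
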